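(* Let $A\in\mathbb{Z}^{m\times n}$ have full column rank, let $x^*\in\mathbb{R}^n$, let $y^*\in S(A,x^* )$, let $k:=\dim S(A,y^* )$, and fix $d\in\{1,\dots,k\}$. Then there exists a $d$-dimensional face of $S(A,y^* )$ containing $y^*$ that intersects some $(k-d)$-dimensional face of $S(A,y^* )$ containing $0$.
   Context: With rows $a_1^\top,\dots,a_m^\top$ of $A$, for $x^*\in\mathbb{R}^n$ define the cone $C(A,x^* )=\{x\in\mathbb{R}^n: \operatorname{sign}(a_i^\top x^* )\,a_i^\top x\ge 0 \text{ for all } i \text{ with } a_i^\top x^*\neq 0;\ a_i^\top x=0 \text{ for all } i \text{ with } a_i^\top x^*=0\}$ and the polytope (spindle) $S(A,x^* )=C(A,x^* )\cap(x^*-C(A,x^* ))$. *)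

From HB Require Import structures.
From mathcomp Require Import all_boot all_order all_algebra.
From mathcomp Require Import reals.
Set Implicit Arguments. Unset Strict Implicit. Unset Printing Implicit Defensive.
Import Order.TTheory GRing.Theory Num.Theory.
Local Open Scope ring_scope.

Definition intmxR (R : realType) (m n : nat) (A : 'M[int]_(m, n)) : 'M[R]_(m, n) :=
  map_mx (fun z : int => z%:~R) A.

Definition arow (R : realType) (m n : nat) (A : 'M[int]_(m, n)) (i : 'I_m)
  (x : 'cV[R]_n) : R := (intmxR R A *m x) i 0.

Definition inC (R : realType) (m n : nat) (A : 'M[int]_(m, n)) (xs x : 'cV[R]_n) : Prop :=
  forall i : 'I_m,
    if arow A i xs != 0 then 0 <= Num.sg (arow A i xs) * arow A i x
    else arow A i x == 0.

Definition spindle (R : realType) (m n : nat) (A : 'M[int]_(m, n)) (xs : 'cV[R]_n)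
  (x : 'cV[R]_n) : Prop :=
  inC A xs x /\ inC A xs (xs - x).

Definition face (R : realType) (n : nat) (P F : 'cV[R]_n -> Prop) : Prop :=
  exists (c : 'cV[R]_n) (delta : R),
    (forall x, P x -> (c^T *m x) 0 0 <= delta) /\
    (forall x, F x <-> (P x /\ (c^T *m x) 0 0 = delta)).

Definition affdim (R : realType) (n : nat) (S : 'cV[R]_n -> Prop) (k : nat) : Prop :=
  exists x0 : 'cV[R]_n, S x0 /\
  exists V : 'M[R]_(k, n),
    (forall j : 'I_k, S (x0 + (row j V)^T)) /\
    row_free V /\
    (forall x, S x -> ((x - x0)^T <= V)%MS).

From mathcomp Require Import all_boot all_order all_algebra.
From mathcomp Require Import reals boolp zify ring lra.
Import Order.TTheory GRing.Theory Num.Theory.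
Local Open Scope ring_scope.
Set Implicit Arguments. Unset Strict Implicit. Unset Printing Implicit Defensive.

(* Signing each row a_i of A by the sign of a_i^T y (+1 when it vanishes) gives
   a matrix G of full row rank with y G >= 0, and the spindle becomes the box
   {x | 0 <= x G <= y G} of row vectors.  For x in the box let Z(x) and Zf(x) be
   the constraints tight at 0 and at y.  A face {x | (x G)_T = 0} or
   {x | (x G)_T = (y G)_T} containing a point strictly inside all constraints
   outside T has dimension dim ker G_T; in particular k = dim ker G_Z(y).
   Walk along edges of the box with strictly increasing height sum_i (x G)_i,
   from the vertex 0, where dim ker G_Zf = k, to the vertex y, where it is 0, and
   let z' be the vertex after the last vertex z with dim ker G_Zf(z) > d.  The
   kernels of G_Z(z') and G_Zf(z) share only the direction of the edge [z, z'],
   so dim ker G_Z(z') <= k + 1 - dim ker G_Zf(z) <= k - d.  The faces through z'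
   given by Z(z') and Zf(z') are then enlarged one dimension at a time, each
   step following an extreme ray of a cone found by the simplex ratio test, to
   dimensions exactly k - d and d. *)

Section LinearInequalities.
Variable R : realFieldType.

Lemma small_enough_all (I : finType) (P : I -> R -> Prop) :
  (forall i, exists2 e, 0 < e & forall t, 0 < t -> t <= e -> P i t) ->
  exists2 e, 0 < e & forall t, 0 < t -> t <= e -> forall i, P i t.
Proof.
move=> small.
suff [e e_gt0 He] : exists2 e, 0 < e &
    forall t, 0 < t -> t <= e -> forall i, i \in enum I -> P i t.
  by exists e => // t t_gt0 te i; apply: He; rewrite ?mem_enum.
elim: (enum I) => [|i s [e e_gt0 He]]; first by exists 1.
have [ei ei_gt0 Hi] := small i.
exists (Order.min e ei); first by rewrite lt_min e_gt0.
move=> t t_gt0; rewrite le_min => /andP[te tei] j; rewrite inE => /orP[/eqP->|js].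
  exact: Hi.
exact: He.
Qed.

Lemma perturb_in_interval (a lo hi b : R) : lo < a -> a < hi ->
  exists2 e, 0 < e & forall t, 0 < t -> t <= e -> lo <= a + t * b <= hi.
Proof.
move=> lo_a a_hi; pose mu := Order.min (a - lo) (hi - a).
have mu_gt0 : 0 < mu by rewrite lt_min !subr_gt0 lo_a a_hi.
exists (mu / (`|b| + 1)); first by rewrite divr_gt0 // ltr_pwDr.
move=> t t_gt0 te.
have tb_mu : `|t * b| <= mu.
  rewrite normrM (gtr0_norm t_gt0).
  apply: le_trans (ler_wpM2r (normr_ge0 b) te) _.
  rewrite mulrAC ler_pdivrMr ?ltr_pwDr // ler_wpM2l ?(ltW mu_gt0) //.
  by rewrite lerDl.
have := ler_norm (t * b); have := ler_norm (- (t * b)); rewrite normrN.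
have : mu <= a - lo by rewrite ge_min lexx.
have : mu <= hi - a by rewrite ge_min lexx orbT.
move=> *; apply/andP; split; lra.
Qed.

Lemma ratio_test (I : finType) (P : pred I) (a b : I -> R) :
  (forall i, P i -> 0 < a i) -> (exists i, P i && (b i < 0)) ->
  exists2 t, 0 < t & (forall i, P i -> 0 <= a i + t * b i) /\
    exists j, [/\ P j, b j < 0 & a j + t * b j = 0].
Proof.
move=> a_gt0 [i0 Pi0].
have [j /andP[Pj bj_lt0] min_j] :=
  @arg_minP _ R I i0 (fun i => P i && (b i < 0)) (fun i => a i / - b i) Pi0.
have a_j := a_gt0 j Pj; have nbj_gt0 : 0 < - b j by rewrite oppr_gt0.
exists (a j / - b j); first by rewrite divr_gt0.
split; last by exists j; split => //; field; rewrite ltr0_neq0.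
move=> i Pi; case: (ltP (b i) 0) => bi.
  have := min_j i; rewrite Pi bi => /(_ isT).
  rewrite ler_pdivlMr ?oppr_gt0 // mulrN; lra.
have : 0 <= a j / - b j * b i by rewrite mulr_ge0 // ltW // divr_gt0.
have := a_gt0 i Pi; lra.
Qed.

Lemma sign_box_iff (a b : R) :
  let s := if a < 0 then -1 else 1 in
  (if a != 0 then 0 <= Num.sg a * b else b == 0) /\
  (if a != 0 then 0 <= Num.sg a * (a - b) else a - b == 0) <->
  0 <= s * b <= s * a.
Proof.
case: (ltrgtP a 0) => [a_lt0|a_gt0|->] /=.
- rewrite ltr0_sg // !mulN1r; split=> [[b1 b2]|/andP[b1 b2]].
    by apply/andP; split; lra.
  by split; lra.
- rewrite gtr0_sg // !mul1r; split=> [[b1 b2]|/andP[b1 b2]].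
    by apply/andP; split; lra.
  by split; lra.
- by rewrite !mul1r sub0r oppr_eq0 -eq_le eq_sym; split=> [[]|].
Qed.

End LinearInequalities.

Lemma no_unbounded_ascent d (X : porderType d) (T : Type) (K : finType)
    (P : T -> Prop) (f : T -> X) (key : T -> K) :
  (forall z1 z2, P z1 -> P z2 -> key z1 = key z2 -> z1 = z2) ->
  (forall z, P z -> exists2 z', P z' & (f z < f z')%O) ->
  forall z, ~ P z.
Proof.
move=> key_inj ascent z.
pose above z := [set q : K | `[< exists z', [/\ P z', (f z < f z')%O & key z' = q] >]].
have [N] := ubnP #|above z|; elim: N z => // N IH z /ltnSE le_N Pz.
have [z' Pz' lt_zz'] := ascent z Pz.
apply: (IH z') => //; apply: leq_trans le_N; apply: proper_card.
apply/properP; split.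
  apply/subsetP => q; rewrite !inE => /asboolP[z'' [Pz'' lt_z'z'' <-]].
  by apply/asboolP; exists z''; split => //; apply: lt_trans lt_z'z''.
exists (key z'); first by rewrite inE; apply/asboolP; exists z'.
rewrite inE; apply/asboolP => -[z'' [Pz'' lt_z'z'' /(key_inj _ _ Pz'' Pz') eq_z'']].
by rewrite eq_z'' ltxx in lt_z'z''.
Qed.

Section RowEntries.
Variables (Rg : pzRingType) (n m : nat) (M : 'M[Rg]_(n, m)).

Lemma mulmx_rowD (x y : 'rV_n) i : ((x + y) *m M) 0 i = (x *m M) 0 i + (y *m M) 0 i.
Proof. by rewrite mulmxDl [LHS]mxE. Qed.

Lemma mulmx_rowB (x y : 'rV_n) i : ((x - y) *m M) 0 i = (x *m M) 0 i - (y *m M) 0 i.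
Proof. by rewrite mulmx_rowD mulNmx [X in _ + X]mxE. Qed.

Lemma mulmx_rowZ a (x : 'rV_n) i : ((a *: x) *m M) 0 i = a * (x *m M) 0 i.
Proof. by rewrite -scalemxAl [LHS]mxE. Qed.

End RowEntries.

Section Annihilator.
Variables (F : fieldType) (n m : nat) (G : 'M[F]_(n, m)).

Definition annih (T : {set 'I_m}) : 'M[F]_n :=
  kermx (G *m diag_mx (\row_i (i \in T)%:R)).

Lemma sub_annihP (r : 'rV_n) (T : {set 'I_m}) :
  reflect (forall i, i \in T -> (r *m G) 0 i = 0) (r <= annih T)%MS.
Proof.
apply: (iffP sub_kermxP); rewrite mulmxA mul_mx_diag.
  move=> /rowP r0 i iT; have := r0 i.
  by rewrite [LHS]mxE [RHS]mxE [X in _ * X]mxE iT mulr1.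
move=> r0; apply/rowP => i; rewrite [LHS]mxE [RHS]mxE [X in _ * X]mxE.
by case: (boolP (i \in T)) => iT; [rewrite r0 // mul0r | rewrite mulr0].
Qed.

Lemma annihS (T1 T2 : {set 'I_m}) : T1 \subset T2 -> (annih T2 <= annih T1)%MS.
Proof.
move=> sT12; apply/row_subP => j; apply/sub_annihP => i iT1.
by apply/sub_annihP: (subsetP sT12 i iT1); apply: row_sub.
Qed.

Lemma rank_annih_lt (T1 T2 : {set 'I_m}) (w : 'rV_n) : T1 \subset T2 ->
  (w <= annih T1)%MS -> ~~ (w <= annih T2)%MS ->
  (\rank (annih T2) < \rank (annih T1))%N.
Proof.
move=> sT12 wT1 wT2; apply: rank_ltmx; rewrite ltmxE annihS //=.
by apply: contra wT2 => /(submx_trans wT1).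
Qed.

Lemma rank_annih_setT : row_free G -> \rank (annih setT) = 0%N.
Proof.
move=> Gfree; apply/eqP; rewrite mxrank_eq0 -submx0; apply/row_subP => j.
have /sub_annihP row0 := row_sub j (annih setT).
rewrite submx0 -(mulmx_free_eq0 _ Gfree); apply/eqP/rowP => i.
by rewrite row0 ?in_setT // mxE.
Qed.

Lemma mulmx_row_indicator (r : 'rV_n) (T : {set 'I_m}) :
  (r *m (G *m \col_i (i \in T)%:R)) 0 0 = \sum_(i in T) (r *m G) 0 i.
Proof.
rewrite mulmxA [LHS]mxE [RHS]big_mkcond /=; apply: eq_bigr => i _.
by rewrite [X in _ * X]mxE; case: (i \in T); rewrite ?mulr1 ?mulr0.
Qed.

Lemma mulmx_row_diag (s : 'rV[F]_m) (r : 'rV_n) i :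
  (r *m (G *m diag_mx s)) 0 i = (r *m G) 0 i * s 0 i.
Proof. by rewrite mulmxA mul_mx_diag [LHS]mxE. Qed.

End Annihilator.

Lemma annih_scale (F : fieldType) n m (G : 'M[F]_(n, m)) (s : 'rV[F]_m) T :
  (forall i, s 0 i != 0) -> (annih (G *m diag_mx s) T == annih G T)%MS.
Proof.
move=> s_neq0; apply/andP; split; apply/row_subP => j; apply/sub_annihP => i iT.
  have /sub_annihP/(_ i iT)/eqP := row_sub j (annih (G *m diag_mx s) T).
  by rewrite mulmx_row_diag mulf_eq0 (negbTE (s_neq0 i)) orbF => /eqP.
have /sub_annihP/(_ i iT) := row_sub j (annih G T).
by rewrite mulmx_row_diag => ->; rewrite mul0r.
Qed.

Section ExtremeRay.
Variables (R : realFieldType) (n m p : nat) (G : 'M[R]_(n, m)) (U : 'M[R]_(p, n)).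
Variables (T : {set 'I_m}) (h : 'cV[R]_n).

Definition tight (w : 'rV[R]_n) := [set i in T | (w *m G) 0 i == 0].

Lemma tight_sub w : tight w \subset T.
Proof. by apply/subsetP => i; rewrite inE => /andP[]. Qed.

Definition in_cone (w : 'rV[R]_n) :=
  (w <= U)%MS /\ forall i, i \in T -> 0 <= (w *m G) 0 i.
Local Notation lineality := (U :&: annih G T)%MS.

(* Project a vector of the face of [w] lying outside [lineality + w] onto the
   kernel of [h] along [w]. *)
Lemma face_direction w : in_cone w -> 0 < (w *m h) 0 0 ->
  ((\rank lineality).+1 < \rank (U :&: annih G (tight w)))%N ->
  exists d : 'rV_n, [/\ (d <= U :&: annih G (tight w))%MS, (d *m h) 0 0 = 0
                     & exists i, (i \in T) && ((d *m G) 0 i < 0)].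
Proof.
case=> wU _ hw_gt0 rank_gt; set E := (U :&: annih G (tight w))%MS.
have wE : (w <= E)%MS.
  by rewrite sub_capmx wU; apply/sub_annihP => i; rewrite inE => /andP[_ /eqP].
have [q qE q_out] : exists2 q : 'rV_n, (q <= E)%MS & ~~ (q <= lineality + w)%MS.
  suff /row_subPn[j qj] : ~~ (E <= lineality + w)%MS by exists (row j E); rewrite ?row_sub.
  apply: contraTN rank_gt => /mxrankS le_E; rewrite -leqNgt.
  apply: leq_trans le_E _; have [le_sum _] := mxrank_adds_leqif lineality w.
  by apply: leq_trans le_sum _; rewrite -[(\rank lineality).+1]addn1 leq_add2l rank_leq_row.
pose q' := q - ((q *m h) 0 0 / (w *m h) 0 0) *: w.
have q'E : (q' <= E)%MS by rewrite addmx_sub ?eqmx_opp ?scalemx_sub.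
have hq' : (q' *m h) 0 0 = 0 by rewrite mulmx_rowB mulmx_rowZ divfK ?subrr ?gt_eqF.
have [i /andP[iT q'i]] : exists i, (i \in T) && ((q' *m G) 0 i != 0).
  apply/existsP; apply: contraR q_out => /existsPn q'0.
  have -> : q = q' + ((q *m h) 0 0 / (w *m h) 0 0) *: w by rewrite subrK.
  rewrite addmx_sub_adds ?scalemx_sub // sub_capmx (submx_trans q'E (capmxSl _ _)).
  by apply/sub_annihP => j jT; apply/eqP; have := q'0 j; rewrite jT negbK.
exists (- Num.sg ((q' *m G) 0 i) *: q'); split; first by rewrite scalemx_sub.
  by rewrite mulmx_rowZ hq' mulr0.
by exists i; rewrite iT mulmx_rowZ mulNr -normrEsg oppr_lt0 normr_gt0.
Qed.

Lemma extreme_ray_step w : in_cone w -> 0 < (w *m h) 0 0 ->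
  ((\rank lineality).+1 < \rank (U :&: annih G (tight w)))%N ->
  exists w', [/\ in_cone w', (w' *m h) 0 0 = (w *m h) 0 0 & tight w \proper tight w'].
Proof.
move=> wK hw_gt0 rank_gt; have [wU w_ge0] := wK.
have [d [dE hd [i /andP[iT di_lt0]]]] := face_direction wK hw_gt0 rank_gt.
have d_annih j : j \in tight w -> (d *m G) 0 j = 0.
  by move=> jt; have /sub_annihP := submx_trans dE (capmxSr _ _); apply.
pose free l := (l \in T) && (l \notin tight w).
have w_gt0 l : free l -> 0 < (w *m G) 0 l.
  move=> /andP[lT lt]; rewrite lt_def w_ge0 // andbT.
  by apply: contra lt => wl0; rewrite inE lT.
have d_neg : exists l, free l && ((d *m G) 0 l < 0).
  exists i; rewrite /free iT di_lt0 andbT /=.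
  by apply/negP => /d_annih di0; rewrite di0 ltxx in di_lt0.
have [t t_gt0 [t_ok [j [/andP[jT jt] dj_lt0 wj_t]]]] := ratio_test w_gt0 d_neg.
pose w' := w + t *: d.
have w'G l : (w' *m G) 0 l = (w *m G) 0 l + t * (d *m G) 0 l.
  by rewrite mulmx_rowD mulmx_rowZ.
have tight_w' l : l \in tight w -> l \in tight w'.
  by move=> lt; have := lt; rewrite !inE w'G d_annih // mulr0 addr0.
exists w'; split.
- split; first by rewrite addmx_sub // scalemx_sub // (submx_trans dE (capmxSl _ _)).
  move=> l lT; case: (boolP (l \in tight w)) => lt.
    by have := tight_w' l lt; rewrite inE lT => /eqP->.
  by rewrite w'G; apply: t_ok; rewrite /free lT.
- by rewrite mulmx_rowD mulmx_rowZ hd mulr0 addr0.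
- apply/properP; split; first by apply/subsetP.
  by exists j => //; rewrite inE jT w'G; apply/eqP.
Qed.

Lemma extreme_ray w : in_cone w -> 0 < (w *m h) 0 0 ->
  exists w', [/\ in_cone w', 0 < (w' *m h) 0 0
             & (\rank (U :&: annih G (tight w')) <= (\rank lineality).+1)%N].
Proof.
have [N] := ubnP (#|T| - #|tight w|); elim: N w => // N IH w /ltnSE le_N wK hw.
case: (leqP (\rank (U :&: annih G (tight w))) (\rank lineality).+1) => [le_r|gt_r].
  by exists w.
have [w' [w'K hw' lt_w]] := extreme_ray_step wK hw gt_r.
apply: (IH w') => //; last by rewrite hw'.
have := proper_card lt_w; have := subset_leq_card (tight_sub w'); lia.
Qed.

End ExtremeRay.

Section Spindle.
Variables (R : realFieldType) (n m : nat) (G : 'M[R]_(n, m)) (y : 'rV[R]_n).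
Hypothesis G_free : row_free G.
Hypothesis Gy_ge0 : forall i, 0 <= (y *m G) 0 i.

Local Notation phi i x := ((x *m G) 0 i).
Local Notation dim T := (\rank (annih G T)).

Definition in_spindle (x : 'rV[R]_n) := forall i, 0 <= phi i x <= phi i y.
Definition zeros (x : 'rV[R]_n) := [set i | phi i x == 0].
Definition tops (x : 'rV[R]_n) := [set i | phi i x == phi i y].

Local Notation k := (dim (zeros y)).

Lemma in_spindle0 : in_spindle 0.
Proof. by move=> i; rewrite mul0mx mxE lexx Gy_ge0. Qed.

Lemma in_spindle_top : in_spindle y.
Proof. by move=> i; rewrite lexx Gy_ge0. Qed.

Lemma in_spindle_reflect x : in_spindle x -> in_spindle (y - x).
Proof.
move=> Sx i; rewrite mulmx_rowB; have /andP[? ?] := Sx i.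
by apply/andP; split; lra.
Qed.

Lemma tops_reflect x : tops x = zeros (y - x).
Proof. by apply/setP => i; rewrite !inE mulmx_rowB subr_eq0 eq_sym. Qed.

Lemma zeros_top_sub x : in_spindle x -> zeros y \subset zeros x.
Proof.
move=> Sx; apply/subsetP => i; rewrite !inE => /eqP y0.
by have := Sx i; rewrite y0 -eq_le eq_sym.
Qed.

Lemma zeros_top_sub_tops x : in_spindle x -> zeros y \subset tops x.
Proof.
move=> Sx; apply/subsetP => i iy; have := subsetP (zeros_top_sub Sx) i iy.
by move: iy; rewrite !inE => /eqP-> /eqP->.
Qed.

Lemma zeros0 : zeros 0 = setT.
Proof. by apply/setP => i; rewrite !inE mul0mx mxE eqxx. Qed.

Lemma tops0 : tops 0 = zeros y.
Proof. by apply/setP => i; rewrite !inE mul0mx mxE eq_sym. Qed.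

Lemma tops_top : tops y = setT.
Proof. by apply/setP => i; rewrite !inE eqxx. Qed.

Lemma lower_direction z : in_spindle z -> (dim (zeros z) < k)%N ->
  exists w, [/\ forall i, i \in zeros z -> 0 <= phi i w,
              zeros y \subset tight G (zeros z) w
            & dim (tight G (zeros z) w) = (dim (zeros z)).+1].
Proof.
move=> Sz lt_k; set T := zeros z; set U := annih G (zeros y).
have yT := zeros_top_sub Sz.
pose h := G *m \col_i (i \in T)%:R.
have yK : in_cone G U T y.
  by split=> [|i _]; [apply/sub_annihP => i; rewrite inE => /eqP | apply: Gy_ge0].
have hy_gt0 : 0 < (y *m h) 0 0.
  rewrite mulmx_row_indicator lt_def sumr_ge0 ?andbT //.
  apply: contraTneq lt_k => /psumr_eq0P y0; rewrite -leqNgt; apply/mxrankS/annihS.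
  by apply/subsetP => i iT; rewrite inE y0.
have [w [[wU w_ge0] hw_gt0 rank_le]] := extreme_ray yK hy_gt0.
have yTw : zeros y \subset tight G T w.
  apply/subsetP => i iy; rewrite inE (subsetP yT i iy) /=.
  by apply/eqP; move/sub_annihP: wU; apply.
exists w; split => //; apply/eqP; rewrite eqn_leq; apply/andP; split.
  apply: leq_trans (leq_trans rank_le _); last by rewrite ltnS mxrankS ?capmxSr.
  by apply: mxrankS; rewrite sub_capmx submx_refl andbT annihS.
apply: (rank_annih_lt (tight_sub _ _ _) (w := w)).
  by apply/sub_annihP => i; rewrite inE => /andP[_ /eqP].
apply: contraTN hw_gt0 => /sub_annihP w0.
by rewrite mulmx_row_indicator big1 ?ltxx.
Qed.

Lemma lower_step z : in_spindle z -> (dim (zeros z) < k)%N ->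
  exists z', [/\ in_spindle z', zeros z' \subset zeros z
              & dim (zeros z') = (dim (zeros z)).+1].
Proof.
move=> Sz lt_k; have [w [w_ge0 yTw dim_Tw]] := lower_direction Sz lt_k.
set T := zeros z in w_ge0 yTw dim_Tw *; set Tw := tight G T w in yTw dim_Tw *.
pose z' t := 2^-1 *: z + t *: w.
have z'E t i : phi i (z' t) = phi i z / 2 + t * phi i w.
  by rewrite mulmx_rowD !mulmx_rowZ mulrC.
have [t t_gt0 small_ok] : exists2 t, 0 < t & forall t', 0 < t' -> t' <= t -> forall i,
    0 <= phi i (z' t') <= phi i y /\ (phi i (z' t') == 0) = (i \in Tw).
  apply: small_enough_all => i; have /andP[z_ge0 z_le] := Sz i.
  have [iT|iT] := boolP (i \in T); last first.
    have z_gt0 : 0 < phi i z by rewrite lt_def z_ge0 andbT; rewrite inE in iT.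
    have [e e_gt0 near] := @perturb_in_interval R (phi i z / 2) (phi i z / 4) (phi i z)
      (phi i w) ltac:(lra) ltac:(lra).
    exists e => // t t_gt0 te; rewrite z'E; have /andP[lo hi] := near t t_gt0 te.
    split; first by apply/andP; split; lra.
    by rewrite (contraNF (subsetP (tight_sub _ _ _) i)) // gt_eqF //; lra.
  have z0 : phi i z = 0 by apply/eqP; rewrite inE in iT.
  have [iTw|iTw] := boolP (i \in Tw).
    have w0 : phi i w = 0 by move: iTw; rewrite inE => /andP[_ /eqP].
    by exists 1 => // t _ _; rewrite z'E z0 w0 mulr0 mul0r addr0 eqxx lexx Gy_ge0.
  have w_gt0 : 0 < phi i w by rewrite lt_def w_ge0 // andbT; rewrite inE iT in iTw.
  have y_gt0 : 0 < phi i y.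
    by rewrite lt_def Gy_ge0 andbT; apply: contra iTw => y0; apply: (subsetP yTw); rewrite inE.
  exists (phi i y / phi i w); first by rewrite divr_gt0.
  move=> t t_gt0 te; rewrite z'E z0 mul0r add0r -ler_pdivlMr // te gt_eqF ?mulr_gt0 //.
  by rewrite ltW ?mulr_gt0.
have z'_ok := small_ok t t_gt0 (lexx t).
have zeros_z' : zeros (z' t) = Tw by apply/setP => i; rewrite inE; case: (z'_ok i).
exists (z' t); split; first by move=> i; case: (z'_ok i).
  by rewrite zeros_z' tight_sub.
by rewrite zeros_z'.
Qed.

Lemma lower_grade e z : in_spindle z -> (dim (zeros z) <= e <= k)%N ->
  exists p, [/\ in_spindle p, zeros p \subset zeros z & dim (zeros p) = e].
Proof.
move=> + /andP[]; have [N] := ubnP (e - dim (zeros z)).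
elim: N z => // N IH z /ltnSE le_N Sz le_ze le_ek.
have [eq_ze|ne_ze] := eqVneq (dim (zeros z)) e; first by exists z.
have lt_ze : (dim (zeros z) < e)%N by rewrite ltn_neqAle ne_ze le_ze.
have [z' [Sz' sub_z' dim_z']] := lower_step Sz (leq_trans lt_ze le_ek).
have le_N' : (e - dim (zeros z') < N)%N.
  by apply: leq_trans le_N; rewrite dim_z' subnS prednK ?subn_gt0.
have [p [Sp sub_p dim_p]] := IH z' le_N' Sz' ltac:(by rewrite dim_z') le_ek.
by exists p; split => //; apply: subset_trans sub_z'.
Qed.

Lemma upper_grade e z : in_spindle z -> (dim (tops z) <= e <= k)%N ->
  exists p, [/\ in_spindle p, tops p \subset tops z & dim (tops p) = e].
Proof.
move=> Sz; rewrite tops_reflect => /(lower_grade (in_spindle_reflect Sz)).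
case=> p [Sp sub_p dim_p]; exists (y - p).
by rewrite !tops_reflect subKr; split => //; apply: in_spindle_reflect.
Qed.

Definition vertex z := in_spindle z /\ dim (zeros z :|: tops z) = 0%N.

Lemma vertex0 : vertex 0.
Proof. by split; [exact: in_spindle0 | rewrite zeros0 setTU rank_annih_setT]. Qed.

Lemma vertex_inj z1 z2 : vertex z1 -> zeros z1 = zeros z2 -> tops z1 = tops z2 -> z1 = z2.
Proof.
case=> _ /eqP; rewrite mxrank_eq0 => /eqP ann0 eq_zeros eq_tops.
apply/eqP; rewrite -subr_eq0 -submx0 -ann0; apply/sub_annihP => i.
rewrite mulmx_rowB inE => /orP[] i1; have := i1; rewrite ?eq_zeros ?eq_tops => i2.
  by move: i1 i2; rewrite !inE => /eqP-> /eqP->; rewrite subrr.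
by move: i1 i2; rewrite !inE => /eqP-> /eqP->; rewrite subrr.
Qed.

Local Notation height x := (\sum_i phi i x).

Lemma edge_direction z : vertex z -> z != y ->
  exists w : 'rV_n, [/\ (w <= annih G (zeros y))%MS,
              forall i, i \in zeros z -> 0 <= phi i w,
              forall i, i \in tops z -> i \notin zeros z -> phi i w <= 0,
              0 < height w
            & (dim (tight G (zeros z :|: tops z) w) <= 1)%N].
Proof.
case=> Sz vz zy; set T := zeros z :|: tops z; set U := annih G (zeros y).
(* Flipping the signs of the functionals tight at the top turns the tangent
   cone of the spindle at [z] into a cone of the shape [extreme_ray] handles. *)
pose s := \row_i (if i \in zeros z then 1 else -1 : R).
have sE i : s 0 i = if i \in zeros z then 1 else -1 by rewrite mxE.
have s_neq0 i : s 0 i != 0 by rewrite sE; case: ifP; rewrite ?oppr_eq0 oner_eq0.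
pose G' := G *m diag_mx s.
have G'E (x : 'rV_n) i : (x *m G') 0 i = phi i x * s 0 i := mulmx_row_diag G s x i.
pose h := G *m \col_i (i \in [set: 'I_m])%:R.
have hE (x : 'rV_n) : (x *m h) 0 0 = height x.
  by rewrite /h mulmx_row_indicator; apply: eq_bigl => i; rewrite in_setT.
have yz_ge0 i : 0 <= phi i (y - z).
  by rewrite mulmx_rowB subr_ge0; case/andP: (Sz i).
have yzK : in_cone G' U T (y - z).
  split=> [|i].
    apply/sub_annihP => i iy; have := subsetP (zeros_top_sub Sz) i iy.
    by move: iy; rewrite !inE mulmx_rowB => /eqP-> /eqP->; rewrite subrr.
  rewrite G'E sE inE => /orP[] iz; first by rewrite iz mulr1.
  by move: iz; rewrite inE mulmx_rowB => /eqP->; rewrite subrr mul0r.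
have h_gt0 : 0 < ((y - z) *m h) 0 0.
  rewrite hE lt_def sumr_ge0 ?andbT //; apply: contra zy => /eqP/(psumr_eq0P _) yz0.
  rewrite eq_sym -subr_eq0 -(mulmx_free_eq0 _ G_free); apply/eqP/rowP => i.
  by rewrite yz0 ?mxE.
have [w [[wU w_ge0] hw_gt0 rank_le]] := extreme_ray yzK h_gt0.
have tightE : tight G' T w = tight G T w.
  by apply/setP => i; rewrite !inE G'E mulf_eq0 (negbTE (s_neq0 i)) orbF.
have /andP[_ annih_G'] := annih_scale G (tight G' T w) s_neq0.
exists w; split => //.
- move=> i iz; have := w_ge0 i; rewrite G'E sE iz mulr1; apply.
  by rewrite inE iz.
- move=> i it iz; have := w_ge0 i; rewrite G'E sE (negbTE iz) mulrN1 oppr_ge0.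
  by apply; rewrite inE it orbT.
- by rewrite -hE.
rewrite -tightE; apply: leq_trans (leq_trans rank_le _).
  apply: mxrankS; rewrite sub_capmx annih_G' andbT; apply: annihS.
  apply/subsetP => i iy; rewrite tightE inE inE (subsetP (zeros_top_sub Sz) i iy) /=.
  by apply/eqP; move/sub_annihP: wU; apply.
by rewrite ltnS -vz -(eqmx_rank (annih_scale G T s_neq0)) mxrankS ?capmxSr.
Qed.

Lemma move_to_boundary z w : in_spindle z -> (w <= annih G (zeros y))%MS ->
  (forall i, i \in zeros z -> 0 <= phi i w) ->
  (forall i, i \in tops z -> i \notin zeros z -> phi i w <= 0) ->
  (exists i, 0 < phi i w) ->
  exists2 t, 0 < t & in_spindle (z + t *: w) /\
    exists2 j, j \in zeros (z + t *: w) :|: tops (z + t *: w) & phi j w != 0.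
Proof.
move=> Sz wU w_ge0 w_le0 [i0 wi0_gt0].
have w_y0 i : phi i y = 0 -> phi i w = 0.
  by move=> y0; move/sub_annihP: wU; apply; rewrite inE y0.
have at_top i : phi i z = phi i y -> phi i w <= 0.
  move=> zy; have it : i \in tops z by rewrite inE zy.
  have [iz|iz] := boolP (i \in zeros z); last exact: w_le0.
  by rewrite w_y0 // -zy; apply/eqP; rewrite inE in iz.
(* One lower and one upper constraint per functional. *)
pose a (c : bool * 'I_m) := if c.1 then phi c.2 y - phi c.2 z else phi c.2 z.
pose b (c : bool * 'I_m) := if c.1 then - phi c.2 w else phi c.2 w.
have b_neg : exists c, (0 < a c) && (b c < 0).
  exists (true, i0); rewrite /a /b /= oppr_lt0 wi0_gt0 andbT subr_gt0.
  rewrite lt_neqAle; case/andP: (Sz i0) => _ ->; rewrite andbT.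
  by apply: contraTneq wi0_gt0 => /at_top; rewrite leNgt.
have [t t_gt0 [t_ok [[top j] [_ bj_lt0 abj0]]]] :=
  @ratio_test R _ (fun c => 0 < a c) a b (fun c => id) b_neg.
have z'E i : phi i (z + t *: w) = phi i z + t * phi i w.
  by rewrite mulmx_rowD mulmx_rowZ.
exists t => //; split.
  move=> i; rewrite z'E; have /andP[z_ge0 z_le] := Sz i; apply/andP; split.
    have [z_gt0|] := boolP (0 < phi i z); first exact: (t_ok (false, i)).
    rewrite -leNgt => z_le0; have iz : i \in zeros z by rewrite inE eq_le z_le0.
    by rewrite addr_ge0 ?mulr_ge0 ?(ltW t_gt0) ?w_ge0.
  have [gap|] := boolP (0 < phi i y - phi i z).
    by have := t_ok (true, i) gap; rewrite /a /b /= mulrN; lra.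
  rewrite subr_gt0 -leNgt => y_le; have /at_top w_le : phi i z = phi i y.
    by apply/eqP; rewrite eq_le z_le.
  have : t * phi i w <= 0 by rewrite mulr_ge0_le0 ?(ltW t_gt0).
  lra.
exists j; move: bj_lt0 abj0; rewrite /a /b ?inE ?z'E; case: top => /= bj_lt0 abj0.
- by apply/orP; right; apply/eqP; rewrite mulrN in abj0; lra.
- by rewrite abj0 eqxx.
- by rewrite -oppr_eq0 ltr0_neq0.
- by rewrite ltr0_neq0.
Qed.

Lemma edge_step z : vertex z -> z != y ->
  exists z', [/\ vertex z', height z < height z'
              & (dim (zeros z') + dim (tops z) <= k.+1)%N].
Proof.
move=> vz zy; have [w [wU w_ge0 w_le0 hw_gt0 dim_Tw]] := edge_direction vz zy.
case: vz => Sz _; set Tw := tight G (zeros z :|: tops z) w in dim_Tw.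
have w_pos : exists i, 0 < phi i w.
  apply/existsP; apply: contraTT hw_gt0 => /existsPn w_le0'.
  by rewrite -leNgt sumr_le0 // => i _; rewrite leNgt w_le0'.
have [t t_gt0 [Sz' [j j_new wj]]] := move_to_boundary Sz wU w_ge0 w_le0 w_pos.
set z' := z + t *: w in Sz' j_new *.
have z'E i : phi i z' = phi i z + t * phi i w by rewrite mulmx_rowD mulmx_rowZ.
have Tw_z' i : i \in Tw -> phi i z' = phi i z.
  by rewrite inE => /andP[_ /eqP w0]; rewrite z'E w0 mulr0 addr0.
exists z'; split.
- split => //; apply/eqP; rewrite -leqn0 -ltnS; apply: leq_trans dim_Tw.
  apply: (rank_annih_lt _ (w := w)).
  + apply/subsetP => i iTw; have := iTw; rewrite !inE Tw_z' // => /andP[].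
    by case/orP => ->; rewrite ?orbT.
  + by apply/sub_annihP => i; rewrite inE => /andP[_ /eqP].
  + by apply: contra wj => /sub_annihP w0; apply/eqP/w0.
- rewrite (eq_bigr _ (fun i _ => z'E i)) big_split /= -mulr_sumr ltrDl.
  exact: mulr_gt0.
(* Both kernels lie in that of [zeros y], and they meet inside the edge direction. *)
rewrite -mxrank_sum_cap -[k.+1]addn1; apply: leq_add.
  apply/mxrankS; rewrite addsmx_sub; apply/andP; split; apply: annihS.
    exact: zeros_top_sub.
  exact: zeros_top_sub_tops.
apply: leq_trans dim_Tw; apply/mxrankS/row_subP => r.
have := row_sub r (annih G (zeros z') :&: annih G (tops z))%MS.
rewrite sub_capmx => /andP[/sub_annihP r_z' /sub_annihP r_tz].
apply/sub_annihP => i iTw; have := iTw; rewrite in_set in_setU => /andP[/orP[iz|it] _].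
  by apply: r_z'; rewrite inE Tw_z' //; rewrite inE in iz.
exact: r_tz.
Qed.

Lemma balanced_point d : (d <= k)%N ->
  exists z, [/\ in_spindle z, (dim (tops z) <= d)%N & (dim (zeros z) <= k - d)%N].
Proof.
move=> le_dk; have [eq_dk|ne_dk] := eqVneq d k.
  exists 0; rewrite tops0 zeros0 (rank_annih_setT G_free) eq_dk.
  by split; [exact: in_spindle0 | exact: leqnn | exact: leq0n].
case: (pselect (exists z, [/\ in_spindle z, (dim (tops z) <= d)%N
                                & (dim (zeros z) <= k - d)%N])) => // none.
(* Otherwise an edge step from any vertex whose top set has dimension above [d]
   reaches another such vertex, of larger height, and vertices are finitely many. *)
exfalso; apply: (@no_unbounded_ascent _ R _ _
  (fun z => vertex z /\ (d < dim (tops z))%N) (fun z => height z)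
  (fun z => (zeros z, tops z)) _ _ 0).
- by move=> z1 z2 [vz1 _] _ [eq_zeros eq_tops]; apply: vertex_inj.
- move=> z [vz lt_d]; have zy : z != y.
    by apply: contraTneq lt_d => ->; rewrite tops_top rank_annih_setT.
  have [z' [vz' lt_h le_dim]] := edge_step vz zy; exists z' => //; split => //.
  rewrite ltnNge; apply/negP => le_d; apply: none; exists z'.
  by split => //; [case: vz' | lia].
- by split; [exact: vertex0 | rewrite tops0; lia].
Qed.

Lemma relint_open (T : {set 'I_m}) q (r : 'rV_n) : in_spindle q ->
  (forall i, i \notin T -> 0 < phi i q < phi i y) -> (r <= annih G T)%MS ->
  exists2 e, 0 < e & forall t, 0 < t -> t <= e -> in_spindle (q + t *: r).
Proof.
move=> Sq q_int rT; apply: small_enough_all => i; rewrite /in_spindle.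
have [iT|iT] := boolP (i \in T).
  exists 1 => // t _ _; rewrite mulmx_rowD mulmx_rowZ.
  by rewrite (sub_annihP _ _ _ rT i iT) mulr0 addr0; apply: Sq.
have /andP[lo hi] := q_int i iT.
have [e e_gt0 near] := perturb_in_interval (phi i r) lo hi.
by exists e => // t t_gt0 te; rewrite mulmx_rowD mulmx_rowZ near.
Qed.

Lemma lower_midpoint p : in_spindle p ->
  [/\ in_spindle (2^-1 *: p),
      forall i, i \notin zeros p -> 0 < phi i (2^-1 *: p) < phi i y
    & forall i, i \in zeros p -> phi i (2^-1 *: p) = 0].
Proof.
move=> Sp; split=> i; rewrite mulmx_rowZ; have /andP[p_ge0 p_le] := Sp i.
- by apply/andP; split; lra.
- rewrite inE => p_neq0; have : 0 < phi i p by rewrite lt_def p_neq0.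
  by move=> p_gt0; apply/andP; split; lra.
- by rewrite inE => /eqP->; rewrite mulr0.
Qed.

Lemma upper_midpoint p : in_spindle p ->
  [/\ in_spindle (2^-1 *: (p + y)),
      forall i, i \notin tops p -> 0 < phi i (2^-1 *: (p + y)) < phi i y
    & forall i, i \in tops p -> phi i (2^-1 *: (p + y)) = phi i y].
Proof.
move=> Sp; split=> i; rewrite mulmx_rowZ mulmx_rowD; have /andP[p_ge0 p_le] := Sp i.
- by apply/andP; split; lra.
- rewrite inE => p_neq; have : phi i p < phi i y by rewrite lt_neqAle p_neq.
  by move=> p_lt; apply/andP; split; lra.
- by rewrite inE => /eqP->; field.
Qed.

End Spindle.

Section Faces.
Variable R : realType.

Lemma face_tight n m (P F : 'cV[R]_n -> Prop) (L : 'M[R]_(n, m)) (b : 'rV[R]_m)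
    (T : {set 'I_m}) :
  (forall x, P x -> forall i, i \in T -> (x^T *m L) 0 i <= b 0 i) ->
  (forall x, F x <-> P x /\ forall i, i \in T -> (x^T *m L) 0 i = b 0 i) ->
  face P F.
Proof.
move=> valid Fx; pose c := L *m \col_i (i \in T)%:R.
have cE (x : 'cV_n) : (c^T *m x) 0 0 = \sum_(i in T) (x^T *m L) 0 i.
  have -> : c^T *m x = (x^T *m c)^T by rewrite [RHS]trmx_mul trmxK.
  by rewrite [LHS]mxE mulmx_row_indicator.
exists c, (\sum_(i in T) b 0 i); split.
  by move=> x Px; rewrite cE; apply: ler_sum => i iT; apply: valid.
move=> x; rewrite Fx cE; split=> [[Px eqT]|[Px sumT]]; split => //.
  by apply: eq_bigr => i iT; apply: eqT.
have gap_ge0 i : i \in T -> 0 <= b 0 i - (x^T *m L) 0 i by rewrite subr_ge0; apply: valid.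
have gap0 : \sum_(i in T) (b 0 i - (x^T *m L) 0 i) = 0 by rewrite sumrB sumT subrr.
by move=> i iT; apply/eqP; rewrite eq_sym -subr_eq0 (psumr_eq0P gap_ge0 gap0).
Qed.

Lemma affdim_relint n p (F : 'cV[R]_n -> Prop) (q : 'cV[R]_n) (M : 'M[R]_(p, n)) :
  F q -> (forall x, F x -> ((x - q)^T <= M)%MS) ->
  (forall r, (r <= M)%MS ->
     exists2 e, 0 < e & forall t, 0 < t -> t <= e -> F (q + t *: r^T)) ->
  affdim F (\rank M).
Proof.
move=> Fq F_sub open_dir; set B := row_base M.
have [e e_gt0 Fe] : exists2 e, 0 < e &
    forall t, 0 < t -> t <= e -> forall j, F (q + t *: (row j B)^T).
  apply: small_enough_all => j; apply: open_dir.
  by rewrite (submx_trans (row_sub j B)) ?eq_row_base.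
have e_neq0 : e != 0 by rewrite gt_eqF.
exists q; split => //; exists (e *: B); split; [|split].
- by move=> j; rewrite !linearZ; apply: Fe.
- by rewrite /row_free (eqmx_scale _ e_neq0) -/(row_free B) row_base_free.
- by move=> x Fx; rewrite (eqmx_scale _ e_neq0) eq_row_base; apply: F_sub.
Qed.

Lemma affdim_le n (F : 'cV[R]_n -> Prop) k1 k2 :
  affdim F k1 -> affdim F k2 -> (k2 <= k1)%N.
Proof.
case=> x1 [_ [V1 [_ [free1 sub1]]]] [x2 [Fx2 [V2 [rows2 [free2 _]]]]].
rewrite -(eqP free1) -(eqP free2); apply/mxrankS/row_subP => j.
have -> : row j V2 = (x2 + (row j V2)^T - x1)^T - (x2 - x1)^T.
  by apply/matrixP => a b; rewrite !mxE; ring.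
by rewrite addmx_sub ?eqmx_opp ?sub1.
Qed.

Lemma affdim_unique n (F : 'cV[R]_n -> Prop) k1 k2 :
  affdim F k1 -> affdim F k2 -> k1 = k2.
Proof.
by move=> dim1 dim2; apply/eqP; rewrite eqn_leq (affdim_le dim1 dim2) (affdim_le dim2 dim1).
Qed.

End Faces.

Section SpindleFaces.
Variables (R : realType) (n m : nat) (G : 'M[R]_(n, m)) (y : 'rV[R]_n).
Hypothesis G_free : row_free G.
Hypothesis Gy_ge0 : forall i, 0 <= (y *m G) 0 i.

Local Notation phi i x := ((x *m G) 0 i).
Local Notation dim T := (\rank (annih G T)).
Local Notation S := (fun x : 'cV[R]_n => in_spindle G y x^T).

Definition upper_face (T : {set 'I_m}) (x : 'cV[R]_n) :=
  in_spindle G y x^T /\ forall i, i \in T -> phi i x^T = phi i y.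
Definition lower_face (T : {set 'I_m}) (x : 'cV[R]_n) :=
  in_spindle G y x^T /\ forall i, i \in T -> phi i x^T = 0.

Lemma face_upper T : face S (upper_face T).
Proof.
apply: (face_tight (L := G) (b := y *m G) (T := T)) => // x Sx i _.
by case/andP: (Sx i).
Qed.

Lemma face_lower T : face S (lower_face T).
Proof.
have negE (x : 'cV_n) i : (x^T *m - G) 0 i = - phi i x^T by rewrite mulmxN [LHS]mxE.
apply: (face_tight (L := - G) (b := 0) (T := T)) => x.
  by move=> Sx i _; rewrite negE [X in _ <= X]mxE oppr_le0; case/andP: (Sx i).
split=> -[Sx eqT]; split=> // i iT; first by rewrite negE eqT // oppr0 mxE.
by apply/eqP; rewrite -oppr_eq0 -negE eqT // mxE.
Qed.

Lemma affdim_face (F : 'cV[R]_n -> Prop) (T : {set 'I_m}) (q : 'rV[R]_n) :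
  in_spindle G y q -> (forall i, i \notin T -> 0 < phi i q < phi i y) ->
  (forall x, F x <-> in_spindle G y x^T /\ forall i, i \in T -> phi i x^T = phi i q) ->
  affdim F (dim T).
Proof.
move=> Sq q_int Fx; apply: (affdim_relint (q := q^T)).
- by apply/Fx; rewrite trmxK.
- move=> x /Fx[_ xq]; apply/sub_annihP => i iT.
  by rewrite linearB /= trmxK mulmx_rowB xq // subrr.
- move=> r rT; have [e e_gt0 Se] := relint_open Sq q_int rT.
  exists e => // t t_gt0 te; apply/Fx; rewrite linearD linearZ /= !trmxK.
  split; first exact: Se.
  by move=> i iT; rewrite mulmx_rowD mulmx_rowZ (sub_annihP _ _ _ rT i iT) mulr0 addr0.
Qed.

Lemma affdim_upper_face p :
  in_spindle G y p -> affdim (upper_face (tops G y p)) (dim (tops G y p)).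
Proof.
move=> Sp; have [Sq q_int q_top] := upper_midpoint Sp.
apply: affdim_face Sq q_int _ => x; rewrite /upper_face.
by split=> -[Sx eqT]; split=> // i iT; rewrite eqT // q_top.
Qed.

Lemma affdim_lower_face p :
  in_spindle G y p -> affdim (lower_face (zeros G p)) (dim (zeros G p)).
Proof.
move=> Sp; have [Sq q_int q_zero] := lower_midpoint Sp.
apply: affdim_face Sq q_int _ => x; rewrite /lower_face.
by split=> -[Sx eqT]; split=> // i iT; rewrite eqT // q_zero.
Qed.

Lemma affdim_spindle : affdim S (dim (zeros G y)).
Proof.
have [Sq q_int q_zero] := lower_midpoint (in_spindle_top Gy_ge0).
apply: affdim_face Sq q_int _ => x; split=> [Sx|[]//]; split=> // i iy.
by rewrite q_zero //; apply/eqP; have := subsetP (zeros_top_sub Sx) i iy; rewrite inE.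
Qed.

Lemma spindle_faces_meet d : (d <= dim (zeros G y))%N ->
  exists F F' : 'cV[R]_n -> Prop,
    [/\ face S F, affdim F d & F y^T] /\
    [/\ face S F', affdim F' (dim (zeros G y) - d) & F' 0] /\
    (exists z, F z /\ F' z).
Proof.
move=> le_dk; have [z [Sz tops_z zeros_z]] := balanced_point G_free Gy_ge0 le_dk.
have [p1 [Sp1 sub1 dim1]] :=
  upper_grade Gy_ge0 Sz (e := d) (introT andP (conj tops_z le_dk)).
have [p2 [Sp2 sub2 dim2]] :=
  lower_grade Gy_ge0 Sz (introT andP (conj zeros_z (leq_subr d _))).
exists (upper_face (tops G y p1)), (lower_face (zeros G p2)); split; [|split].
- split; [exact: face_upper | by rewrite -dim1; apply: affdim_upper_face |].
  by split=> [|i _]; rewrite trmxK //; apply: in_spindle_top.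
- split; [exact: face_lower | by rewrite -dim2; apply: affdim_lower_face |].
  by split=> [|i _]; rewrite trmx0 ?mul0mx ?mxE //; apply: in_spindle0.
- exists z^T; rewrite /upper_face /lower_face trmxK; split; split=> // i iT.
    by apply/eqP; have := subsetP sub1 i iT; rewrite inE.
  by apply/eqP; have := subsetP sub2 i iT; rewrite inE.
Qed.

End SpindleFaces.

Section IntegerSpindle.
Variables (R : realType) (m n : nat) (A : 'M[int]_(m, n)) (ys : 'cV[R]_n).

(* The sign of the row [i] at [ys], with [1] on rows vanishing at [ys], so that
   the spindle is the box [0 <= s_i a_i^T x <= s_i a_i^T ys]. *)
Definition spindle_sign i : R := if arow A i ys < 0 then -1 else 1.

Definition spindle_functionals : 'M[R]_(n, m) :=
  (intmxR R A)^T *m diag_mx (\row_i spindle_sign i).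

Lemma spindle_functionalsE (x : 'cV[R]_n) i :
  (x^T *m spindle_functionals) 0 i = spindle_sign i * arow A i x.
Proof.
by rewrite mulmx_row_diag -trmx_mul mulrC [X in X * _]mxE [X in _ * X]mxE.
Qed.

Lemma arowB i (x x' : 'cV[R]_n) : arow A i (x - x') = arow A i x - arow A i x'.
Proof. by rewrite /arow mulmxBr [LHS]mxE [X in _ + X]mxE. Qed.

Lemma spindle_box : spindle A ys = (fun x => in_spindle spindle_functionals ys^T x^T).
Proof.
apply/funext => x; apply/propext; rewrite /spindle /inC /in_spindle.
have box i := sign_box_iff (arow A i ys) (arow A i x).
split=> [[Cx Cyx] i|Sx].
  rewrite !spindle_functionalsE; apply/(box i).1.
  by split; [apply: Cx | rewrite -arowB; apply: Cyx].
split=> i; have := Sx i; rewrite !spindle_functionalsE => /(box i).2[Cx Cyx] //.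
by rewrite arowB.
Qed.

Lemma spindle_functionals_ge0 i : 0 <= (ys^T *m spindle_functionals) 0 i.
Proof.
rewrite spindle_functionalsE /spindle_sign.
by case: ltrP => [/ltW|]; rewrite ?mulN1r ?mul1r ?oppr_ge0.
Qed.

Lemma spindle_functionals_free : \rank (intmxR R A) = n -> row_free spindle_functionals.
Proof.
move=> rankA; rewrite /row_free mxrankMfree ?mxrank_tr ?rankA //.
apply/row_freeP; exists (diag_mx (\row_i spindle_sign i)).
rewrite mulmx_diag -diag_const_mx; congr diag_mx; apply/rowP => i.
by rewrite !mxE /spindle_sign; case: ifP; rewrite ?mulrNN mulr1.
Qed.

End IntegerSpindle.

Theorem lemma6 (R : realType) (m n : nat) (A : 'M[int]_(m, n))
  (xs ys : 'cV[R]_n) (k d : nat) :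
  \rank (intmxR R A) = n ->
  spindle A xs ys ->
  affdim (spindle A ys) k ->
  (1 <= d <= k)%N ->
  exists F G : 'cV[R]_n -> Prop,
    [/\ face (spindle A ys) F, affdim F d & F ys] /\
    [/\ face (spindle A ys) G, affdim G (k - d) & G 0] /\
    (exists z, F z /\ G z).
Proof.
move=> rankA _ dimS /andP[_ le_dk]; rewrite spindle_box in dimS *.
have G_free := spindle_functionals_free ys rankA.
have Gy_ge0 := spindle_functionals_ge0 A ys.
have k_eq := affdim_unique dimS (affdim_spindle Gy_ge0); subst k.
by have := spindle_faces_meet G_free Gy_ge0 le_dk; rewrite trmxK.
Qed.
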